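(* Let $r\in\mathbb{Z}$, let $P(r)$ be the lower-triangular matrix with $(n,k)$ entry $[x^n]\,\frac{1+rx^2}{1+x^2}\left(\frac{x}{1+x^2}\right)^k$, let $M(r)=P(r)^{-1}$, and let $s_n(r)=\sum_{k=0}^n M(r)_{n,k}$ be the row sums of $M(r)$. Then the Hankel transform of $s_n(r)$ is $$H_n(r):=\det\big(s_{i+j}(r)\big)_{0\le i,j\le n}= r^n U_n\left(\frac{\frac{1}{r}-1}{2}\right)\quad\text{for all } n\ge 0,$$ where $U_n$ is the Chebyshev polynomial of the second kind and the right-hand side is understood as the polynomial in $r$ it defines.
   Context: $[x^n]h(x)$ denotes the coefficient of $x^n$ in $h(x)$. $U_n$ is the Chebyshev polynomial of the second kind ($U_0=1$, $U_1(y)=2y$, $U_{n}(y)=2yU_{n-1}(y)-U_{n-2}(y)$); $r^nU_n\left(\frac{1/r-1}{2}\right)$ is a polynomial in $r$ (beginning $1,\ 1-r,\ 1-2r,\ r^3+r^2-3r+1,\ldots$). $M(r)$ is the moment matrix of the restricted Chebyshev–Boubaker polynomials, equal to the Riordan array $\left(\frac{\sqrt{1-4x^2}(r-1)+r+1}{2(r+x^2(r-1)^2)}, \frac{1-\sqrt{1-4x^2}}{2x}\right)$. *)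

From HB Require Import structures.
From mathcomp Require Import all_boot all_order all_algebra.
Set Implicit Arguments. Unset Strict Implicit. Unset Printing Implicit Defensive.
Import Order.TTheory GRing.Theory Num.Theory.
Local Open Scope ring_scope.

(* Truncation of the power series 1/(1+x^2) = sum_j (-x^2)^j up to degree 2N
   (exact in all coefficients of degree <= N). *)
Definition geomInv (N : nat) : {poly rat} :=
  \sum_(j < N.+1) ((-1) ^+ j) *: 'X^(2 * j).

(* P(r)_{n,k} = [x^n] (1 + r x^2)/(1+x^2) * (x/(1+x^2))^k
             = [x^n] (1 + r x^2) * x^k * (1/(1+x^2))^(k+1). *)
Definition Pentry (r : int) (n k : nat) : rat :=
  ((1 + r%:~R *: 'X^2) * 'X^k * (geomInv n) ^+ k.+1)`_n.

Definition Pmx (r : int) (N : nat) : 'M[rat]_N.+1 :=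
  \matrix_(i < N.+1, j < N.+1) Pentry r i j.

(* M(r) = P(r)^{-1}; for a lower-triangular matrix, the entries (n,k), k <= n,
   of the inverse are those of the inverse of the leading block. *)
Definition Ment (r : int) (n k : nat) : rat :=
  (invmx (Pmx r n)) (inord n) (inord k).

Definition srow (r : int) (n : nat) : rat := \sum_(k < n.+1) Ment r n k.

Definition hankel (r : int) (n : nat) : rat :=
  \det (\matrix_(i < n.+1, j < n.+1) srow r (i + j)).

Fixpoint chebU2 (n : nat) : {poly rat} * {poly rat} :=
  match n with
  | 0 => (1, 'X *+ 2)
  | m.+1 => let (a, b) := chebU2 m in (b, 'X *+ 2 * b - a)
  end.
Definition chebU (n : nat) : {poly rat} := (chebU2 n).1.

(* r^n U_n((1/r - 1)/2), as the polynomial in r it defines: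
   with U_n = sum_k c_k y^k (deg U_n = n),
   r^n U_n((1/r-1)/2) = sum_k c_k r^(n-k) ((1-r)/2)^k. *)
Definition rhsU (r : rat) (n : nat) : rat :=
  \sum_(k < n.+1) (chebU n)`_k * r ^+ (n - k) * ((1 - r) / 2) ^+ k.

From HB Require Import structures.
From mathcomp Require Import all_boot all_order all_algebra.
From mathcomp Require Import zify ring.
Set Implicit Arguments. Unset Strict Implicit. Unset Printing Implicit Defensive.
Import Order.TTheory GRing.Theory Num.Theory.
Local Open Scope ring_scope.

(* P(r) is the coefficient matrix of the monic polynomials p_0 = 1, p_1 = x,
   p_(n+2) = x p_(n+1) - g_(n+1) p_n, with g_1 = 1 - r and g_n = 1 for n > 1,
   because its column generating functions C_k satisfy (1 + x^2) C_(k+1) = x C_k.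
   Since P(r) s = (1, 1, ...), the row sums s_n of M(r) = P(r)^-1 are the
   moments L(x^n) of the linear functional L with L(p_n) = 1 for all n.
   A unitriangular change of basis turns the Hankel matrix (L(x^(i+j))) into
   the Gram matrix (L(q_i q_j)) of any monic basis q.  The three-term
   recurrence determines L(p_i p_j) in closed form, and in the basis
   q_i = p_i - p_(i-1) the Gram matrix is tridiagonal, with diagonal
   1, 1-r, 1-r, ... and off-diagonal 0, r, r, ...  Its leading minors then
   satisfy D_(n+2) = (1-r) D_(n+1) - r^2 D_n, the recurrence of
   r^n U_n((1/r - 1)/2). *)

Definition leading_block (R : Type) (f : nat -> nat -> R) n : 'M[R]_n :=
  \matrix_(i < n, j < n) f i j.

Section UnitriangularSystem.
Variables (R : comUnitRingType) (f : nat -> nat -> R) (b : nat -> R).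
Hypotheses (f_upper : forall i j, (i < j)%N -> f i j = 0) (f_diag : forall i, f i i = 1).

Definition last_solution N : R :=
  (invmx (leading_block f N.+1) *m \col_(i < N.+1) b i) ord_max 0.

Lemma leading_block_unit N : leading_block f N.+1 \in unitmx.
Proof.
rewrite unitmxE det_trig; last by apply/is_trig_mxP => i j lt_ij; rewrite mxE f_upper.
by rewrite big1 ?unitr1 // => i _; rewrite mxE f_diag.
Qed.

Lemma solution_prefix N (k : 'I_N.+1) (x : 'cV_N.+1) :
  leading_block f N.+1 *m x = \col_i b i -> x k 0 = last_solution k.
Proof.
move=> sol_x; pose y := \col_(i < k.+1) x (widen_ord (ltn_ord k) i) 0.
have sol_y : leading_block f k.+1 *m y = \col_i b i.
  apply/colP => i; move/colP/(_ (widen_ord (ltn_ord k) i)): sol_x; rewrite !mxE => <-.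
  rewrite [RHS](bigID (fun j : 'I_N.+1 => (j < k.+1)%N)) /= [X in _ = _ + X]big1 ?addr0.
    by rewrite (big_ord_narrow (ltn_ord k)); apply: eq_bigr => j _; rewrite !mxE.
  move=> j; rewrite -leqNgt => le_kj.
  by rewrite mxE f_upper ?mul0r // (leq_trans (ltn_ord i)).
rewrite /last_solution -sol_y mulKmx ?leading_block_unit // mxE.
by congr (x _ 0); apply: val_inj.
Qed.

Lemma last_solution_sum N : \sum_(k < N.+1) f N k * last_solution k = b N.
Proof.
set x := invmx (leading_block f N.+1) *m \col_i b i.
have sol_x : leading_block f N.+1 *m x = \col_i b i by rewrite mulKVmx ?leading_block_unit.
move/matrixP/(_ ord_max 0): (sol_x); rewrite !mxE => <-.
by apply: eq_bigr => k _; rewrite mxE (solution_prefix k sol_x).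
Qed.

End UnitriangularSystem.

Lemma det_tridiag (R : comNzRingType) (f : nat -> nat -> R) m :
  (forall i j, (i.+1 < j)%N || (j.+1 < i)%N -> f i j = 0) ->
  \det (leading_block f m.+2) =
  f m.+1 m.+1 * \det (leading_block f m.+1) - f m m.+1 * f m.+1 m * \det (leading_block f m).
Proof.
move=> f_far; rewrite (expand_det_col _ ord_max) !big_ord_recr /= big1 ?add0r; last first.
  by move=> i _; rewrite mxE f_far ?mul0r //= ltnS ltn_ord.
have minor_max k : row' ord_max (col' ord_max (leading_block f k.+1)) = leading_block f k.
  by apply/matrixP => i j; rewrite !mxE !lift_max.
rewrite /cofactor minor_max !mxE /=; set B := row' _ _.
rewrite (expand_det_row _ ord_max) big_ord_recr /= big1 ?add0r; last first.
  by move=> j _; rewrite !mxE f_far ?mul0r // lift_max /= /bump leqnn add1n ltnS ltn_ord orbT.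
have -> : B ord_max ord_max = f m.+1 m by rewrite /B !mxE lift_max /= /bump leqnn.
rewrite /cofactor.
have -> : row' ord_max (col' ord_max B) = leading_block f m.
  apply/matrixP => i j; rewrite /B !mxE !lift_max /= /bump.
  by rewrite !(leqNgt m) !ltn_ord.
have sign_even (a : nat) : (-1) ^+ (a + a) = 1 :> R by rewrite -signr_odd addnn odd_double.
by rewrite /= !sign_even addnS exprS sign_even; ring.
Qed.

Section MomentFunctional.
Variable R : comNzRingType.
Implicit Types (s : nat -> R) (p q : {poly R}).

Lemma sum_coef_widen (F : nat -> R) p N : (size p <= N)%N ->
  \sum_(k < size p) p`_k * F k = \sum_(k < N) p`_k * F k.
Proof.
move=> le_pN; rewrite (big_ord_widen N (fun k => p`_k * F k) le_pN) big_mkcond /=.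
by apply: eq_bigr => k _; case: ltnP => // /leq_sizeP/(_ k (leqnn k))->; rewrite mul0r.
Qed.

Definition moment s p : R := \sum_(k < size p) p`_k * s k.

Lemma momentE s p N : (size p <= N)%N -> moment s p = \sum_(k < N) p`_k * s k.
Proof. exact: sum_coef_widen. Qed.

Lemma moment_is_scalar s : scalar (moment s).
Proof.
move=> a p q; set N := maxn (size p) (size q).
have le_N : (size (a *: p + q)%R <= N)%N.
  rewrite (leq_trans (size_polyD _ _)) // geq_max leq_maxr.
  by rewrite (leq_trans (size_scale_leq _ _)) ?leq_maxl.
rewrite !(@momentE _ _ N) ?leq_maxl ?leq_maxr // mulr_sumr -big_split.
by apply: eq_bigr => k _; rewrite coefD coefZ mulrDl mulrA.
Qed.

HB.instance Definition _ s :=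
  GRing.isLinear.Build R {poly R} R *%R (moment s) (moment_is_scalar s).

Lemma momentD s : {morph moment s : p q / p + q}. Proof. exact: linearD. Qed.
Lemma momentB s : {morph moment s : p q / p - q}. Proof. exact: linearB. Qed.
Lemma momentZ s a p : moment s (a *: p) = a * moment s p. Proof. exact: linearZ. Qed.
Lemma moment_sum s (I : Type) (r : seq I) (P : pred I) (F : I -> {poly R}) :
  moment s (\sum_(i <- r | P i) F i) = \sum_(i <- r | P i) moment s (F i).
Proof. exact: linear_sum. Qed.

Lemma momentXnM s k p : moment s ('X^k * p) = moment (fun l => s (k + l)%N) p.
Proof.
rewrite (@momentE _ _ (k + size p)); last first.
  by rewrite (leq_trans (size_mul_leq _ _)) // size_polyXn.
rewrite big_split_ord /= big1 ?add0r => [|i _]; last by rewrite coefXnM ltn_ord mul0r.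
by apply: eq_bigr => i _; rewrite coefXnM ltnNge leq_addr /= addKn.
Qed.

Lemma momentM s p q :
  moment s (p * q) = \sum_(k < size p) p`_k * moment (fun l => s (k + l)%N) q.
Proof.
rewrite -{1}[p]coefK poly_def mulr_suml moment_sum; apply: eq_bigr => k _.
by rewrite -scalerAl momentZ momentXnM.
Qed.

Lemma det_hankel_gram s (b : nat -> {poly R}) n :
  (forall i, size (b i) <= i.+1)%N -> (forall i, (b i)`_i = 1) ->
  \det (leading_block (fun i j => s (i + j)%N) n) =
  \det (leading_block (fun i j => moment s (b i * b j)) n).
Proof.
move=> size_b lead_b; pose B := leading_block (fun i k => (b i)`_k) n.
have size_bn (i : 'I_n) : (size (b i) <= n)%N := leq_trans (size_b i) (ltn_ord i).
have detB : \det B = 1.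
  rewrite det_trig; last first.
    apply/is_trig_mxP => i k lt_ik; rewrite mxE.
    by move/leq_sizeP: (leq_trans (size_b i) lt_ik); apply.
  by rewrite big1 // => i _; rewrite mxE lead_b.
have -> : leading_block (fun i j => moment s (b i * b j)) n =
          B *m leading_block (fun i j => s (i + j)%N) n *m B^T.
  apply/matrixP => i j; rewrite !mxE momentM.
  rewrite (sum_coef_widen (fun k => moment (fun l => s (k + l)%N) (b j)) (size_bn i)).
  under [RHS]eq_bigr => l _ do rewrite !mxE big_distrl.
  rewrite exchange_big; apply: eq_bigr => k _.
  rewrite (momentE _ (size_bn j)) mulr_sumr; apply: eq_bigr => l _.
  by rewrite !mxE /= mulrA mulrAC.
by rewrite !det_mulmx det_tr detB mul1r mulr1.
Qed.

End MomentFunctional.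

Section OrthogonalPolynomials.
Variables (R : comNzRingType) (g : nat -> R).

Fixpoint opoly n : {poly R} :=
  match n with
  | 0 => 1
  | 1 => 'X
  | (m.+1 as n').+1 => 'X * opoly n' - g n' *: opoly m
  end.

Lemma opolySS n : opoly n.+2 = 'X * opoly n.+1 - g n.+1 *: opoly n.
Proof. by []. Qed.

Lemma coef_opolySS n k : (opoly n.+2)`_k =
  (if k is k'.+1 then (opoly n.+1)`_k' else 0) - g n.+1 * (opoly n)`_k.
Proof. by rewrite opolySS coefB coefXM coefZ; case: k. Qed.

Lemma opoly_unitriangular n : (forall k, (n < k)%N -> (opoly n)`_k = 0) /\ (opoly n)`_n = 1.
Proof.
elim/ltn_ind: n => -[|[|n]] IH.
- by split=> [k /gtn_eqF|]; rewrite coef1 ?eqxx // => ->.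
- by split=> [k /gtn_eqF|]; rewrite coefX ?eqxx // => ->.
have [gt1 diag1] := IH n.+1 (ltnSn _).
have [gt0 _] := IH n (ltnW (ltnSn _)).
split=> [[|k] // lt_nk|]; rewrite coef_opolySS.
  by rewrite gt1 // gt0 ?mulr0 ?subr0 //; lia.
by rewrite diag1 gt0 ?mulr0 ?subr0.
Qed.

Lemma coef_opoly_gt n k : (n < k)%N -> (opoly n)`_k = 0.
Proof. exact: (opoly_unitriangular n).1. Qed.

Lemma coef_opoly_diag n : (opoly n)`_n = 1.
Proof. exact: (opoly_unitriangular n).2. Qed.

Lemma size_opoly n : (size (opoly n) <= n.+1)%N.
Proof. by apply/leq_sizeP => k; apply: coef_opoly_gt. Qed.

Lemma XopolyS n : 'X * opoly n.+1 = opoly n.+2 + g n.+1 *: opoly n.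
Proof. by rewrite opolySS subrK. Qed.

Definition opoly_diff n := opoly n - (0 < n)%:R *: opoly n.-1.

Lemma coef_opoly_diff_gt n k : (n < k)%N -> (opoly_diff n)`_k = 0.
Proof.
move=> lt_nk; rewrite coefB coefZ !coef_opoly_gt ?mulr0 ?subr0 //.
exact: leq_ltn_trans (leq_pred n) lt_nk.
Qed.

Lemma coef_opoly_diff_diag n : (opoly_diff n)`_n = 1.
Proof.
rewrite coefB coefZ coef_opoly_diag.
by case: n => [|n]; rewrite ?mul0r ?subr0 // coef_opoly_gt ?mulr0 ?subr0.
Qed.

Lemma size_opoly_diff n : (size (opoly_diff n) <= n.+1)%N.
Proof. by apply/leq_sizeP => k; apply: coef_opoly_diff_gt. Qed.

End OrthogonalPolynomials.

Section GramMatrix.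
Variables (R : comNzRingType) (g s : nat -> R).
Hypothesis moment_opoly : forall n, moment s (opoly g n) = 1.

(* L(p_i * x p_j) in terms of G i j = L(p_i p_j), from x p_(j+1) = p_(j+2) + g_(j+1) p_j. *)
Definition gram_mulX (G : nat -> nat -> R) i j : R :=
  if j is j'.+1 then G i j'.+2 + g j'.+1 * G i j' else G i 1.

Lemma gram_opoly_unique (G : nat -> nat -> R) :
  (forall j, G 0%N j = 1) ->
  (forall i j, G i.+1 j = gram_mulX G i j - (if i is i'.+1 then g i * G i' j else 0)) ->
  forall i j, moment s (opoly g i * opoly g j) = G i j.
Proof.
move=> G0 GS; have gram_mulXE i j : (forall j, moment s (opoly g i * opoly g j) = G i j) ->
    moment s ('X * opoly g i * opoly g j) = gram_mulX G i j.
  move=> Gi; rewrite -mulrA mulrCA; case: j => [|j]; first by rewrite mulr1 (Gi 1%N).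
  by rewrite [in LHS]XopolyS mulrDr momentD -scalerAr momentZ !Gi.
elim/ltn_ind => -[|[|i]] IH j.
- by rewrite mul1r moment_opoly G0.
- by rewrite GS subr0 -[opoly g 1](mulr1 'X) (gram_mulXE 0%N) // => k; apply: IH.
rewrite GS opolySS mulrBl momentB -scalerAl momentZ (gram_mulXE i.+1) => [|k]; last exact: IH.
by rewrite IH.
Qed.

Definition gram_diff (G : nat -> nat -> R) i j : R :=
  G i j - (0 < j)%:R * G i j.-1 - (0 < i)%:R * (G i.-1 j - (0 < j)%:R * G i.-1 j.-1).

Lemma moment_opoly_diffM i j : moment s (opoly_diff g i * opoly_diff g j) =
  gram_diff (fun i j => moment s (opoly g i * opoly g j)) i j.
Proof.
rewrite /opoly_diff /gram_diff mulrBl !mulrBr !momentB -!scalerAl -!scalerAr !momentZ.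
ring.
Qed.

End GramMatrix.

Ltac nat_cases_ring :=
  repeat (case: ifP => /=); move=> *;
  repeat match goal with
  | H : is_true (_ && _) |- _ => case/andP: H => ? ?
  | H : is_true (_ || _) |- _ => case/orP: H => ?
  | H : is_true (_ == _) |- _ => move/eqP: H => ?
  | H : _.+1 = _.+1 |- _ => case: H => ?
  end; try (exfalso; lia); try subst; ring.

Section ChebyshevBoubakerGram.
Variables (R : comNzRingType) (r : R).

Definition cb_gamma m : R := if m == 1%N then 1 - r else 1.

Definition cb_gram i j : R :=
  let c m := m.+1%:R + m.-1%:R * r in
  if (i < j)%N then c i else if (j < i)%N then c j else if i is 0 then 1 else c i - r.

Definition cb_jacobi i j : R :=
  if i == j then (if i is 0 then 1 else 1 - r)
  else if ((i.+1 == j) && (0 < i)%N) || ((j.+1 == i) && (0 < j)%N) then r else 0.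

Lemma cb_jacobi_far i j : (i.+1 < j)%N || (j.+1 < i)%N -> cb_jacobi i j = 0.
Proof.
by move=> far; rewrite /cb_jacobi; case: eqP => [eq_ij|_]; [lia | case: ifP => //; lia].
Qed.

Lemma cb_gram0 j : cb_gram 0 j = 1.
Proof. by case: j => [|j]; rewrite /cb_gram //= mul0r addr0. Qed.

Lemma cb_gramS i j : cb_gram i.+1 j =
  gram_mulX cb_gamma cb_gram i j - (if i is i'.+1 then cb_gamma i * cb_gram i' j else 0).
Proof.
rewrite /gram_mulX /cb_gram /cb_gamma.
by case: i => [|[|i]]; case: j => [|[|j]] /=; nat_cases_ring.
Qed.

Lemma moment_opoly_diff_cb s : (forall n, moment s (opoly cb_gamma n) = 1) ->
  forall i j, moment s (opoly_diff cb_gamma i * opoly_diff cb_gamma j) = cb_jacobi i j.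
Proof.
move=> moment_opoly i j.
have gram := gram_opoly_unique moment_opoly cb_gram0 cb_gramS.
rewrite moment_opoly_diffM /gram_diff !gram /cb_gram /cb_jacobi.
by case: i => [|[|i]]; case: j => [|[|j]] /=; nat_cases_ring.
Qed.

End ChebyshevBoubakerGram.

Lemma chebUSS n : chebU n.+2 = 'X *+ 2 * chebU n.+1 - chebU n.
Proof. by rewrite /chebU /=; case: (chebU2 n). Qed.

Lemma coef_chebUSS n k : (chebU n.+2)`_k =
  (if k is k'.+1 then 2 * (chebU n.+1)`_k' else 0) - (chebU n)`_k.
Proof.
rewrite chebUSS coefB mulrnAl coefMn coefXM.
by case: k => [|k]; rewrite ?mul0rn // mulr_natl.
Qed.

Lemma coef_chebU_gt n k : (n < k)%N -> (chebU n)`_k = 0.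
Proof.
elim/ltn_ind: n k => -[|[|n]] IH k lt_nk.
- by rewrite coef1; case: k lt_nk.
- by rewrite /chebU /= coefMn coefX; case: k lt_nk => [|[|k]].
rewrite coef_chebUSS; case: k lt_nk => [//|k] lt_nk.
by rewrite !IH ?mulr0 ?subr0 //; lia.
Qed.

Lemma rhsU0 r : rhsU r 0 = 1.
Proof. by rewrite /rhsU big_ord1 /= coef1 !mulr1. Qed.

Lemma rhsU1 r : rhsU r 1 = 1 - r.
Proof.
rewrite /rhsU !big_ord_recr big_ord0 /= /chebU /= !coefMn !coefX /=.
by rewrite add0r mul0rn mul0r add0r expr0 mulr1 expr1; field.
Qed.

Lemma rhsUSS r n : rhsU r n.+2 = (1 - r) * rhsU r n.+1 - r ^+ 2 * rhsU r n.
Proof.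
rewrite /rhsU; under eq_bigr => k _ do rewrite coef_chebUSS mulrBl mulrBl.
rewrite sumrB; congr (_ - _).
  rewrite big_ord_recl /= mul0r mul0r add0r mulr_sumr; apply: eq_bigr => k _.
  by rewrite /bump /= add0n add1n subSS exprS; field.
rewrite big_ord_recr [X in X + _ = _]big_ord_recr /=.
rewrite !coef_chebU_gt // !mul0r !addr0 mulr_sumr; apply: eq_bigr => k _.
have -> : (n.+2 - k = (n - k) + 2)%N by have := ltn_ord k; lia.
by rewrite exprD; ring.
Qed.

Lemma det_cb_jacobi r n : \det (leading_block (cb_jacobi r) n.+1) = rhsU r n.
Proof.
have det1 : \det (leading_block (cb_jacobi r) 1) = 1 by rewrite det_mx11 mxE.
elim/ltn_ind: n => -[|[|n]] IH; first by rewrite det1 rhsU0.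
  by rewrite det_tridiag ?det1 ?rhsU1 /cb_jacobi /=; [nat_cases_ring | exact: cb_jacobi_far].
rewrite det_tridiag; last exact: cb_jacobi_far.
by rewrite !IH // rhsUSS /cb_jacobi /=; nat_cases_ring.
Qed.

Section RiordanColumns.
Variable r : rat.

Definition column_poly N k : {poly rat} := (1 + r *: 'X^2) * 'X^k * geomInv N ^+ k.+1.

Lemma geomInv_mul N : (1 + 'X^2) * geomInv N = 1 + (-1) ^+ N *: 'X^(2 * N.+1).
Proof.
elim: N => [|N IH]; first by rewrite /geomInv big_ord1 /= !expr0 !scale1r muln1 mulr1.
rewrite /geomInv big_ord_recr /= -/(geomInv N) mulrDr IH.
have -> : (2 * N.+2 = 2 * N.+1 + 2)%N by lia.
by rewrite exprD (exprS (-1) N) -!mul_polyC polyCM polyCN polyC1; ring.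
Qed.

Lemma coef_mul_geom_tail (p : {poly rat}) c N n : (n <= N)%N ->
  (p * (1 + c *: 'X^(2 * N.+1)))`_n = p`_n.
Proof.
move=> le_nN; rewrite mulrDr mulr1 coefD -scalerAr coefZ coefMXn ifT ?mulr0 ?addr0 //.
lia.
Qed.

Lemma coef_mul1X2 (p : {poly rat}) n :
  ((1 + 'X^2) * p)`_n = p`_n + (if n is n'.+2 then p`_n' else 0).
Proof. by rewrite mulrDl mul1r coefD coefXnM; case: n => [|[|n]] //=; rewrite subn2. Qed.

Lemma column_polyS_rec N k n : (n <= N)%N ->
  (column_poly N k.+1)`_n + (if n is n'.+2 then (column_poly N k.+1)`_n' else 0) =
  (if n is n'.+1 then (column_poly N k)`_n' else 0).
Proof.
move=> le_nN; rewrite -coef_mul1X2.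
have -> : (1 + 'X^2) * column_poly N k.+1 = 'X * column_poly N k * (1 + (-1) ^+ N *: 'X^(2 * N.+1)).
  by rewrite -geomInv_mul /column_poly !exprS -!mul_polyC; ring.
by rewrite coef_mul_geom_tail // coefXM; case: n {le_nN}.
Qed.

Lemma column_poly0_rec N n : (n <= N)%N ->
  (column_poly N 0)`_n + (if n is n'.+2 then (column_poly N 0)`_n' else 0) =
  (n == 0)%N%:R + r * (n == 2)%N%:R.
Proof.
move=> le_nN; rewrite -coef_mul1X2.
have -> : (1 + 'X^2) * column_poly N 0 = (1 + r *: 'X^2) * (1 + (-1) ^+ N *: 'X^(2 * N.+1)).
  by rewrite -geomInv_mul /column_poly expr0 expr1 -!mul_polyC; ring.
by rewrite coef_mul_geom_tail // coefD coef1 coefZ coefXn.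
Qed.

Lemma coef_column_poly N n k : (n <= N)%N -> (column_poly N k)`_n = (opoly (cb_gamma r) n)`_k.
Proof.
elim/ltn_ind: n k => n IH k le_nN; case: n IH le_nN => [|[|m]] IH le_nN.
- case: k => [|k]; [have := column_poly0_rec le_nN | have := column_polyS_rec k le_nN];
    by rewrite /= ?mulr0 !addr0 => ->; rewrite ?coef1.
- case: k => [|k]; [have := column_poly0_rec le_nN | have := column_polyS_rec k le_nN];
    by rewrite /= ?mulr0 !addr0 => ->; rewrite ?IH // ?coef1 coefX.
have [le_mN le_m1N] : (m <= N)%N /\ (m.+1 <= N)%N by lia.
case: k => [|k]; [have := column_poly0_rec le_nN | have := column_polyS_rec k le_nN].
  move=> /(canRL (addrK _)) ->; rewrite IH // coef_opolySS /cb_gamma /=.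
  by case: m {IH le_nN le_mN le_m1N} => [|m] /=; rewrite ?coef1 /=; ring.
move=> /(canRL (addrK _)) ->; rewrite !IH // coef_opolySS /cb_gamma /=.
by case: m {IH le_nN le_mN le_m1N} => [|m] /=; rewrite ?coef1 ?mulr0 ?subr0 ?mul1r.
Qed.

End RiordanColumns.

Lemma Pentry_opoly r n k : Pentry r n k = (opoly (cb_gamma r%:~R) n)`_k.
Proof. exact: coef_column_poly. Qed.

Lemma srow_last_solution r n : srow r n = last_solution (Pentry r) (fun=> 1) n.
Proof.
rewrite /srow /Ment /last_solution mxE; apply: eq_bigr => k _.
rewrite mxE mulr1 inord_val; congr (invmx _ _ _); apply: val_inj; exact: inordK.
Qed.

Lemma moment_srow_opoly r n : moment (srow r) (opoly (cb_gamma r%:~R) n) = 1.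
Proof.
rewrite (momentE _ (size_opoly _ n)).
under eq_bigr => k _ do rewrite -Pentry_opoly srow_last_solution.
apply: last_solution_sum => [i j lt_ij|i]; rewrite Pentry_opoly.
  exact: coef_opoly_gt.
exact: coef_opoly_diag.
Qed.

Theorem mainTheorem6 (r : int) (n : nat) :
  hankel r n = rhsU (r%:~R) n.
Proof.
set g := cb_gamma (r%:~R : rat).
rewrite /hankel -[\matrix_(i < n.+1, j < n.+1) _]/(leading_block (fun i j => srow r (i + j)) n.+1).
rewrite (det_hankel_gram _ _ (size_opoly_diff g) (coef_opoly_diff_diag g)).
rewrite -det_cb_jacobi; congr (\det _); apply/matrixP => i j; rewrite !mxE.
exact: moment_opoly_diff_cb (moment_srow_opoly r) i j.
Qed.
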